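(* Let $d\ge1$, $n\ge3$, $u\in\mathbb{C}\setminus\{0\}$. The defining two-sided ideal of $\mathrm{CTL}_{d,n}(u)$ in $\mathrm{Y}_{d,n}(u)$ is generated by any single element $c_{i,i+1}$, $1\le i\le n-2$. Hence $\mathrm{CTL}_{d,n}(u)$ is presented by generators $t_1,\ldots,t_n,g_1,\ldots,g_{n-1}$, the defining relations of $\mathrm{Y}_{d,n}(u)$, and the relation $c_{1,2}=0$.
   Context: The Yokonuma–Hecke algebra $\mathrm{Y}_{d,n}(u)$ is the unital associative $\mathbb{C}$-algebra with generators $g_1,\ldots,g_{n-1},t_1,\ldots,t_n$ and relations: $g_ig_j=g_jg_i$ for $|i-j|>1$; $g_{i+1}g_ig_{i+1}=g_ig_{i+1}g_i$; $t_it_j=t_jt_i$; $t_i^d=1$; $g_it_i=t_{i+1}g_i$; $g_it_{i+1}=t_ig_i$; $g_it_j=t_jg_i$ for $j\ne i,i+1$; $g_i^2=1+(u-1)e_i+(u-1)e_ig_i$, where $e_i=\frac1d\sum_{s=0}^{d-1}t_i^st_{i+1}^{d-s}$. For $w\in S_n$ with reduced expression $s_{i_1}\cdots s_{i_k}$ put $g_w=g_{i_1}\cdots g_{i_k}$; $g_{i,i+1}=\sum_{w\in\langle s_i,s_{i+1}\rangle}g_w$ and $c_{i,i+1}=\sum_{a,b,c=0}^{d-1}t_i^at_{i+1}^bt_{i+2}^c\,g_{i,i+1}$ (the sum of $t_1^{a_1}\cdots t_n^{a_n}g_w$ over the subgroup $\langle t_i,t_{i+1},t_{i+2}\rangle\rtimes\langle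 s_i,s_{i+1}\rangle$ of $(\mathbb{Z}/d\mathbb{Z})^n\rtimes S_n$). $\mathrm{CTL}_{d,n}(u)$ is the quotient of $\mathrm{Y}_{d,n}(u)$ by the two-sided ideal generated by all $c_{i,i+1}$. *)

From HB Require Import structures.
From mathcomp Require Import all_boot all_order all_algebra.
From mathcomp Require Import reals complex.
Set Implicit Arguments. Unset Strict Implicit. Unset Printing Implicit Defensive.
Import Order.TTheory GRing.Theory Num.Theory.
Local Open Scope ring_scope.

(* Elements g i (1 <= i <= n-1) and t i (1 <= i <= n) of a C-algebra A,   *)
(* indexed 1-based by natural numbers (values outside the range unused).  *)

Section YH.
Variables (C : fieldType) (A : algType C).
Variables (d n : nat) (u : C) (g t : nat -> A).

Definition yh_e (i : nat) : A :=
  (d%:R)^-1 *: \sum_(s < d) (t i ^+ s * t i.+1 ^+ (d - s)).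

Definition YH_relations : Prop :=
  (forall i j, (1 <= i <= n.-1)%N -> (1 <= j <= n.-1)%N -> (i.+1 < j \/ j.+1 < i)%N ->
         g i * g j = g j * g i) /\
      (forall i, (1 <= i <= n - 2)%N -> g i.+1 * g i * g i.+1 = g i * g i.+1 * g i) /\
      (forall i j, (1 <= i <= n)%N -> (1 <= j <= n)%N -> t i * t j = t j * t i) /\
      (forall i, (1 <= i <= n)%N -> t i ^+ d = 1) /\
      (forall i, (1 <= i <= n.-1)%N ->
         [/\ g i * t i = t i.+1 * g i,
             g i * t i.+1 = t i * g i &
             forall j, (1 <= j <= n)%N -> (j != i)%N -> (j != i.+1)%N -> g i * t j = t j * g i]) /\
      (forall i, (1 <= i <= n.-1)%N ->
         g i ^+ 2 = 1 + (u - 1) *: yh_e i + (u - 1) *: (yh_e i * g i)).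

(* g_{i,i+1} = sum of g_w over w in <s_i, s_{i+1}> (a copy of S_3). *)
Definition yh_gpair (i : nat) : A :=
  1 + g i + g i.+1 + g i * g i.+1 + g i.+1 * g i + g i * g i.+1 * g i.

Definition yh_c (i : nat) : A :=
  (\sum_(a < d) \sum_(b < d) \sum_(c < d)
      (t i ^+ a * t i.+1 ^+ b * t i.+2 ^+ c)) * yh_gpair i.

End YH.

From HB Require Import structures.
From mathcomp Require Import all_boot all_order all_algebra.
From mathcomp Require Import reals complex.
From mathcomp Require Import zify ring.
Set Implicit Arguments. Unset Strict Implicit. Unset Printing Implicit Defensive.
Import Order.TTheory GRing.Theory Num.Theory.
Local Open Scope ring_scope.

(* Each g_k is left-regular: e_k is idempotent, so the quadratic relation
   yields the left inverse (1 + (u^-1 - 1) e_k) (g_k - (u - 1) e_k).  The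
   element g_{i+2} g_{i+1} g_i conjugates t_{i+1}, t_{i+2}, t_{i+3}, g_{i+1},
   g_{i+2} to t_i, t_{i+1}, t_{i+2}, g_i, g_{i+1}, hence satisfies
   Y c_{i+1,i+2} = c_{i,i+1} Y, and g_i g_{i+1} g_{i+2} does the converse.
   Cancelling these left-regular elements shows that c_{i,i+1} = 0 iff
   c_{i+1,i+2} = 0, so all the c_{i,i+1} vanish as soon as one does. *)

Lemma iff_chain_interval (P : nat -> Prop) (a b : nat) :
  (forall k, (a <= k < b)%N -> P k <-> P k.+1) ->
  forall i j, (a <= i <= b)%N -> (a <= j <= b)%N -> P i -> P j.
Proof.
move=> step.
have Pa k : (a <= k <= b)%N -> P k <-> P a.
  move=> /andP[ak kb]; rewrite -(subnKC ak) in kb *.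
  elim: (k - a)%N kb => [|m IHm] hm; first by rewrite addn0.
  rewrite addnS -step; [apply: IHm|]; lia.
by move=> i j hi hj /(Pa i hi) /(Pa j hj).
Qed.

Section Intertwining.
Variable R : pzRingType.

Definition intertwines (x a b : R) := x * a = b * x.

Lemma intertwines1 (x : R) : intertwines x 1 1.
Proof. by rewrite /intertwines mulr1 mul1r. Qed.

Lemma intertwinesD (x a b a' b' : R) :
  intertwines x a a' -> intertwines x b b' -> intertwines x (a + b) (a' + b').
Proof. by rewrite /intertwines mulrDr mulrDl => -> ->. Qed.

Lemma intertwinesM (x a b a' b' : R) :
  intertwines x a a' -> intertwines x b b' -> intertwines x (a * b) (a' * b').
Proof. by rewrite /intertwines => Ha Hb; rewrite mulrA Ha -mulrA Hb mulrA. Qed.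

Lemma intertwinesX (x a b : R) n : intertwines x a b -> intertwines x (a ^+ n) (b ^+ n).
Proof.
move=> Hab; elim: n => [|n IHn]; first by rewrite !expr0; apply: intertwines1.
by rewrite !exprS; apply: intertwinesM.
Qed.

Lemma intertwines_sum (x : R) (I : Type) (r : seq I) (P : pred I) (F G : I -> R) :
  (forall i, P i -> intertwines x (F i) (G i)) ->
  intertwines x (\sum_(i <- r | P i) F i) (\sum_(i <- r | P i) G i).
Proof. by rewrite /intertwines mulr_sumr mulr_suml => FG; apply: eq_bigr. Qed.

Lemma intertwines_comp (x y a b c : R) :
  intertwines x a b -> intertwines y b c -> intertwines (y * x) a c.
Proof. by rewrite /intertwines => Hx Hy; rewrite -mulrA Hx mulrA Hy mulrA. Qed.

Lemma intertwines_comp3 (x y z a b c e : R) :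
  intertwines x a b -> intertwines y b c -> intertwines z c e ->
  intertwines (z * y * x) a e.
Proof. by move=> Hx Hy Hz; apply: intertwines_comp Hx (intertwines_comp Hy Hz). Qed.

End Intertwining.

Section Generic.
Variables (C : fieldType) (A : algType C).

Lemma intertwines_yh_c (d : nat) (g t : nat -> A) (x : A) (i k : nat) :
  intertwines x (t i) (t k) -> intertwines x (t i.+1) (t k.+1) ->
  intertwines x (t i.+2) (t k.+2) ->
  intertwines x (g i) (g k) -> intertwines x (g i.+1) (g k.+1) ->
  intertwines x (yh_c d g t i) (yh_c d g t k).
Proof.
move=> T0 T1 T2 G0 G1; rewrite /yh_c /yh_gpair.
apply: intertwinesM.
  do 3 (apply: intertwines_sum => ? _).
  by apply: intertwinesM; [apply: intertwinesM|]; apply: intertwinesX.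
by repeat first [apply: intertwinesD | apply: intertwinesM | apply: intertwines1].
Qed.

Lemma mean_powers_idem (d : nat) (q : A) : (d%:R : C) != 0 -> q ^+ d = 1 ->
  let e := (d%:R : C)^-1 *: \sum_(s < d) q ^+ s in e * e = e.
Proof.
move=> dn0 qd /=.
have qS : q * \sum_(s < d) q ^+ s = \sum_(s < d) q ^+ s.
  case: d dn0 qd => [|m]; first by rewrite eqxx.
  move=> _ qd; rewrite mulr_sumr big_ord_recr /= -exprS qd big_ord_recl /= expr0 addrC.
  by congr (_ + _); apply: eq_bigr => s _; rewrite -exprS.
set S := \sum_(s < d) q ^+ s in qS *.
have qrS r : q ^+ r * S = S by elim: r => [|r IHr]; rewrite ?mul1r // exprSr -mulrA qS.
rewrite -scalerAl -scalerAr scalerA mulr_suml.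
under eq_bigr do rewrite qrS.
by rewrite sumr_const card_ord -scaler_nat scalerA -mulrA mulVf ?mulr1.
Qed.

Lemma yh_e_sum_powers (d : nat) (w v : A) : GRing.comm w v -> v ^+ d = 1 ->
  \sum_(s < d) w ^+ s * v ^+ (d - s) = \sum_(s < d) (w * v ^+ d.-1) ^+ s.
Proof.
move=> cwv vd; apply: eq_bigr => -[s /= lt_sd] _.
have vper m : v ^+ m = v ^+ (m + d) by rewrite exprD vd mulr1.
rewrite exprMn_comm; last exact/commrX.
rewrite -exprM [v ^+ (d.-1 * s)]vper.
have -> : (d.-1 * s + d = d - s + d * s)%N by nia.
by rewrite exprD exprM vd expr1n mulr1.
Qed.

Lemma quadratic_lreg (u : C) (e x : A) : u != 0 -> e * e = e ->
  x ^+ 2 = 1 + (u - 1) *: e + (u - 1) *: (e * x) -> GRing.lreg x.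
Proof.
move=> u0 ee Hx.
pose h := (1 + (u^-1 - 1) *: e) * (x - (u - 1) *: e).
have linv : h * x = 1.
  rewrite -mulrA mulrBl -scalerAl -expr2 Hx addrK.
  rewrite mulrDl mul1r mulrDr mulr1 -scalerAl -scalerAr scalerA ee.
  rewrite -!addrA -!scalerDl.
  have -> : u - 1 + ((u^-1 - 1) + (u^-1 - 1) * (u - 1)) = 0 by field.
  by rewrite scale0r addr0.
by apply: (can_inj (g := *%R h)) => y; rewrite mulrA linv mul1r.
Qed.

End Generic.

Section Relations.
Variables (C : fieldType) (A : algType C) (d n : nat) (u : C) (g t : nat -> A).
Hypotheses (dn0 : (d%:R : C) != 0) (u0 : u != 0) (rel : YH_relations d n u g t).

Lemma yh_e_idem k : (1 <= k <= n.-1)%N -> yh_e d t k * yh_e d t k = yh_e d t k.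
Proof.
case: rel => _ [_ [Ht [Hd _]]] hk.
have ctt : GRing.comm (t k) (t k.+1) by apply: Ht; lia.
have [tkd tk1d] : t k ^+ d = 1 /\ t k.+1 ^+ d = 1 by split; apply: Hd; lia.
rewrite /yh_e yh_e_sum_powers //; apply: mean_powers_idem => //.
rewrite exprMn_comm; last exact/commrX.
by rewrite -exprM mulnC exprM tk1d expr1n tkd mulr1.
Qed.

Lemma g_lreg k : (1 <= k <= n.-1)%N -> GRing.lreg (g k).
Proof.
case: rel => _ [_ [_ [_ [_ Hq]]]] hk.
exact: quadratic_lreg u0 (yh_e_idem hk) (Hq k hk).
Qed.

Lemma g_t_swapl k : (1 <= k <= n.-1)%N -> intertwines (g k) (t k) (t k.+1).
Proof. by case: rel => _ [_ [_ [_ [Hgt _]]]] /Hgt[]. Qed.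

Lemma g_t_swapr k : (1 <= k <= n.-1)%N -> intertwines (g k) (t k.+1) (t k).
Proof. by case: rel => _ [_ [_ [_ [Hgt _]]]] /Hgt[]. Qed.

Lemma g_t_comm k j : (1 <= k <= n.-1)%N -> (1 <= j <= n)%N ->
  (j != k)%N -> (j != k.+1)%N -> intertwines (g k) (t j) (t j).
Proof. by case: rel => _ [_ [_ [_ [Hgt _]]]] /Hgt[_ _]; apply. Qed.

Lemma g_far_comm k : (1 <= k)%N -> (k.+2 <= n.-1)%N -> GRing.comm (g k.+2) (g k).
Proof. by case: rel => Hc _ k1 kn; apply: Hc; lia. Qed.

Lemma g_braidl k : (1 <= k <= n - 2)%N -> intertwines (g k.+1 * g k) (g k.+1) (g k).
Proof. by case: rel => _ [Hb _] hk; rewrite /intertwines !mulrA Hb. Qed.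

Lemma g_braidr k : (1 <= k <= n - 2)%N -> intertwines (g k * g k.+1) (g k) (g k.+1).
Proof. by case: rel => _ [Hb _] hk; rewrite /intertwines !mulrA Hb. Qed.

Variables (i : nat) (i1 : (1 <= i)%N) (in2 : (i.+1 <= n - 2)%N).

Lemma intertwines_yh_c_down :
  intertwines (g i.+2 * g i.+1 * g i) (yh_c d g t i.+1) (yh_c d g t i).
Proof.
apply: intertwines_yh_c.
1-3: by apply: intertwines_comp3; first [apply: g_t_swapr | apply: g_t_comm]; lia.
- by rewrite -mulrA; apply: intertwines_comp (g_braidl _) (g_far_comm _ _); lia.
- by apply: intertwines_comp (commr_sym (g_far_comm _ _)) (g_braidl _); lia.
Qed.

Lemma intertwines_yh_c_up :
  intertwines (g i * g i.+1 * g i.+2) (yh_c d g t i) (yh_c d g t i.+1).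
Proof.
apply: intertwines_yh_c.
1-3: by apply: intertwines_comp3; first [apply: g_t_swapl | apply: g_t_comm]; lia.
- by apply: intertwines_comp (g_far_comm _ _) (g_braidr _); lia.
- by rewrite -mulrA; apply: intertwines_comp (g_braidr _) (commr_sym (g_far_comm _ _)); lia.
Qed.

Lemma yh_c_shift_eq0 : yh_c d g t i = 0 <-> yh_c d g t i.+1 = 0.
Proof.
have [l0 l1 l2] : [/\ GRing.lreg (g i), GRing.lreg (g i.+1) & GRing.lreg (g i.+2)].
  by split; apply: g_lreg; lia.
have lreg_up := lregM (lregM l0 l1) l2.
have lreg_down := lregM (lregM l2 l1) l0.
split=> c0; apply/eqP.
- by rewrite -(mulrI_eq0 _ lreg_down) intertwines_yh_c_down c0 mul0r.
- by rewrite -(mulrI_eq0 _ lreg_up) intertwines_yh_c_up c0 mul0r.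
Qed.

End Relations.

Theorem corollary2 (R : realType) (d n : nat) (u : R[i]) :
  (1 <= d)%N -> (3 <= n)%N -> u != 0 ->
  forall j : nat, (1 <= j <= n - 2)%N ->
  forall (A : algType R[i]) (g t : nat -> A),
    YH_relations d n u g t -> yh_c d g t j = 0 ->
    forall i : nat, (1 <= i <= n - 2)%N -> yh_c d g t i = 0.
Proof.
move=> d1 _ u0 j hj A g t rel cj i hi.
have dn0 : (d%:R : R[i]) != 0 by rewrite pnatr_eq0 -lt0n.
apply: (iff_chain_interval (P := fun k => yh_c d g t k = 0) _ hj hi cj).
move=> k /andP[k1 kn].
exact: (yh_c_shift_eq0 dn0 u0 rel k1 kn).
Qed.
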